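(* Consider the Adaptive Group Lasso degrees-of-freedom estimate $\widehat{df}_\gamma=\mathrm{trace}[(\mathbf I_n+\gamma\mathbf B)^{-1}(\mathbf A-\gamma\mathbf C)]$ (with $\mathbf A,\mathbf B,\mathbf C$ as defined below) for the estimator $\widehat{\boldsymbol\beta}=\arg\min_{\boldsymbol\beta}\tfrac12\|\mathbf y-\mathbf X\boldsymbol\beta\|_2^2+\gamma\sum_g w_g\|\boldsymbol\beta_g\|_2$, $\gamma\in(\gamma_l,\gamma_{l+1})$. Then: (i) if $n_g=1$ for all groups, $\widehat{df}_\gamma$ reduces to the Adaptive Lasso estimate $|\mathcal A|-\gamma\sum_{j\in\mathcal A}\mathrm{sgn}(\widehat\beta_j)\mathrm{sgn}(\widehat\beta^{\mathsf{LS}}_j)\frac{\partial w_j(z)}{\partial z}\big|_{z=\widehat\beta^{\mathsf{LS}}_j}[(\mathbf X_{\mathcal A}^\top\mathbf X_{\mathcal A})^{-1}]_{\pi(j),\pi(j)}$; (ii) if the weights $w_g$ do not depend on $\mathbf y$, then $\mathbf C=\mathbf 0$ and $\widehat{df}_\gamma$ reduces to the Group Lasso estimate $\mathrm{trace}[(\mathbf I_n+\gamma\mathbf B)^{-1}\mathbf A]$; (iii) if both conditions hold, $\widehat{df}_\gamma=|\mathcal A|$ (the Lasso result).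
   Context: Linear model $\mathbf y=\mathbf X\boldsymbol\beta+\boldsymbol\epsilon$, $\widehat{\boldsymbol\beta}^{\mathsf{LS}}=(\mathbf X^\top\mathbf X)^{-1}\mathbf X^\top\mathbf y$; coefficients partitioned into $G$ groups of cardinalities $n_g$; weights $w_g=w_g(\|\widehat{\boldsymbol\beta}^{\mathsf{LS}}_g\|_2)$ with differentiable $w_g$ (derivative $w_g'$). $\mathcal A=\mathcal A_p=\{j:\widehat\beta_j\ne0\}$, $\mathcal A_G=\{g:\|\widehat{\boldsymbol\beta}_g\|_2\ne0\}$; $\mathbf X_{\mathcal A_G}$ the columns of active groups (with invertible Gram matrix), $\mathbf M=\mathbf X_{\mathcal A_G}(\mathbf X_{\mathcal A_G}^\top\mathbf X_{\mathcal A_G})^{-1}$; $\pi(j)$ the position of $j$ in $\mathcal A$. $\boldsymbol\Pi_{\mathcal A_G}=\mathrm{blockdiag}_{g\in\mathcal A_G}\big(w_g[\mathbf I_{n_g}/\|\widehat{\boldsymbol\beta}_g\|_2-\widehat{\boldsymbol\beta}_g\widehat{\boldsymbol\beta}_g^\top/\|\widehat{\boldsymbol\beta}_g\|_2^3]\big)$, $\boldsymbol\Phi_{\mathcal A_G}=\mathrm{blockdiag}_{g\in\mathcal A_G}\big(\frac{\widehat{\boldsymbol\beta}_g}{\|\widehat{\boldsymbol\beta}_g\|_2}w_g'(\|\widehat{\boldsymbol\beta}^{\mathsf{LS}}_g\|_2)\frac{(\widehat{\boldsymbol\beta}^{\mathsf{LS}}_g)^\top}{\|\widehat{\boldsymbol\beta}^{\mathsf{LS}}_g\|_2}\big)$;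 $\mathbf A=\mathbf M\mathbf X_{\mathcal A_G}^\top$, $\mathbf B=\mathbf M\boldsymbol\Pi_{\mathcal A_G}\mathbf M^\top$, $\mathbf C=\mathbf M\boldsymbol\Phi_{\mathcal A_G}\mathbf M^\top$ (for $\mathbf X^\top\mathbf X=\mathbf I_p$, $\mathbf M=\mathbf X_{\mathcal A_G}$). When $n_g=1$ the group index coincides with the variable index $j$ and $w_j(z)$ is the weight function of variable $j$. Transition points are the values of $\gamma>0$ at which the active set changes. *)

From HB Require Import structures.
From mathcomp Require Import all_boot all_order all_algebra.
From mathcomp Require Import all_classical all_reals.
From mathcomp Require Import topology normedtype derive.
Set Implicit Arguments. Unset Strict Implicit. Unset Printing Implicit Defensive.
Import Order.TTheory GRing.Theory Num.Theory.
Import numFieldNormedType.Exports.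
Local Open Scope ring_scope.

Section AGL.
Variables (R : realType) (n p G : nat).
Implicit Types (X : 'M[R]_(n, p)) (y : 'cV[R]_n) (b : 'cV[R]_p)
  (grp : 'I_p -> 'I_G) (w : 'I_G -> R -> R).

Definition gnorm grp b (g : 'I_G) : R :=
  Num.sqrt (\sum_(j < p | grp j == g) (b j 0) ^+ 2).

Definition gcard grp (g : 'I_G) : nat := #|[set j | grp j == g]|.

Definition bLS X y : 'cV[R]_p := invmx (X^T *m X) *m X^T *m y.

Definition agl_obj X y grp w (gam : R) b : R :=
  2^-1 * (\sum_(i < n) ((y - X *m b) i 0) ^+ 2)
  + gam * \sum_(g < G) w g (gnorm grp (bLS X y) g) * gnorm grp b g.

Definition actP b : {set 'I_p} := [set j | b j 0 != 0].
Definition actG grp b : {set 'I_p} := [set j | gnorm grp b (grp j) != 0].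

(* sub-matrix of the columns in S (in increasing order) *)
Definition subcols X (S : {set 'I_p}) : 'M[R]_(n, #|S|) :=
  \matrix_(i < n, a < #|S|) X i (enum_val a).

Section Mats.
Variables (X : 'M[R]_(n, p)) (y : 'cV[R]_n) (grp : 'I_p -> 'I_G)
  (w : 'I_G -> R -> R) (b : 'cV[R]_p).

Local Notation S := (actG grp b).
Local Notation XA := (subcols X S).
Local Notation bL := (bLS X y).

Definition Mmat : 'M[R]_(n, #|S|) := XA *m invmx (XA^T *m XA).

Definition Pimat : 'M[R]_#|S| :=
  \matrix_(a < #|S|, c < #|S|)
    let j := enum_val a in let k := enum_val c in let g := grp j in
    if grp k == g then
      w g (gnorm grp bL g) *
        ((j == k)%:R / gnorm grp b g - b j 0 * b k 0 / gnorm grp b g ^+ 3)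
    else 0.

Definition Phimat : 'M[R]_#|S| :=
  \matrix_(a < #|S|, c < #|S|)
    let j := enum_val a in let k := enum_val c in let g := grp j in
    if grp k == g then
      b j 0 / gnorm grp b g * derive1 (w g) (gnorm grp bL g)
        * (bL k 0 / gnorm grp bL g)
    else 0.

Definition Amat : 'M[R]_n := Mmat *m XA^T.
Definition Bmat : 'M[R]_n := Mmat *m Pimat *m Mmat^T.
Definition Cmat : 'M[R]_n := Mmat *m Phimat *m Mmat^T.

Definition df_agl (gam : R) : R :=
  \tr (invmx (1%:M + gam *: Bmat) *m (Amat - gam *: Cmat)).

Definition df_gl (gam : R) : R := \tr (invmx (1%:M + gam *: Bmat) *m Amat).

Definition df_al (gam : R) : R :=
  let XP := subcols X (actP b) in
  #|actP b|%:R - gam * \sum_(a < #|actP b|)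
     (let j := enum_val a in
      Num.sg (b j 0) * Num.sg (bL j 0) * derive1 (w (grp j)) `|bL j 0|
        * invmx (XP^T *m XP) a a).
End Mats.
End AGL.

(* With singleton groups every group norm is an absolute value, so each 1x1
   block of Pi is w_j (1/|b_j| - b_j^2/|b_j|^3) = 0, hence B = 0, and Phi is
   diagonal with entries sgn(b_j) sgn(bLS_j) w_j'(|bLS_j|).  Since
   M^T M = (X_A^T X_A)^-1, the trace of C = M Phi M^T picks up the diagonal of
   that inverse, while tr A = |A|.  Weights not depending on y have zero
   derivative, so Phi = 0 and C = 0. *)
From Pilot Require Import Defs.
From HB Require Import structures.
From mathcomp Require Import all_boot all_order all_algebra.
From mathcomp Require Import all_classical all_reals.
From mathcomp Require Import topology normedtype derive.
From mathcomp Require Import ring.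
Import Order.TTheory GRing.Theory Num.Theory.
Import numFieldNormedType.Exports.
Local Open Scope ring_scope.

Lemma divr_norm_sg (R : realFieldType) (x : R) : x / `|x| = Num.sg x.
Proof.
have [->|x0] := eqVneq x 0; first by rewrite mul0r sgr0.
by rewrite {1}[x]numEsg mulfK ?normr_eq0.
Qed.

Section ActiveGram.
Variables (R : realType) (n p G : nat) (X : 'M[R]_(n, p)).
Variables (grp : 'I_p -> 'I_G) (b : 'cV[R]_p).

Local Notation XA := (subcols X (actG grp b)).
Hypothesis XA_unit : XA^T *m XA \in unitmx.

Lemma mxtrace_Amat : \tr (Amat X grp b) = #|actG grp b|%:R.
Proof. by rewrite /Amat /Mmat mxtrace_mulC mulmxA mulmxV // mxtrace1. Qed.

Lemma trmx_Mmat_mul : (Mmat X grp b)^T *m Mmat X grp b = invmx (XA^T *m XA).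
Proof.
rewrite /Mmat trmx_mul trmx_inv trmx_mul trmxK -mulmxA (mulmxA _^T) mulmxA.
by rewrite mulVmx // mul1mx.
Qed.

End ActiveGram.

Section SingletonGroups.
Variables (R : realType) (n p G : nat) (X : 'M[R]_(n, p)) (y : 'cV[R]_n).
Variables (grp : 'I_p -> 'I_G) (w : 'I_G -> R -> R).
Hypothesis gcard1 : forall g : 'I_G, gcard grp g = 1%N.

Lemma grp_inj : injective grp.
Proof.
move=> j k jk; have /eqP/cards1P[x gx] := gcard1 (grp j).
have : j \in [set i | grp i == grp j] by rewrite inE.
have : k \in [set i | grp i == grp j] by rewrite inE jk.
by rewrite gx !inE => /eqP -> /eqP ->.
Qed.

Lemma gnorm_singleton (b : 'cV[R]_p) j : Defs.gnorm grp b (grp j) = `|b j 0|.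
Proof.
rewrite /Defs.gnorm (big_pred1 j) ?sqrtr_sqr // => k /=.
by apply/eqP/eqP => [/grp_inj | ->].
Qed.

Lemma actG_singleton (b : 'cV[R]_p) : actG grp b = actP b.
Proof. by apply/setP => j; rewrite !inE gnorm_singleton normr_eq0. Qed.

Variable b : 'cV[R]_p.

Lemma Pimat_singleton : Pimat X y grp w b = 0.
Proof.
apply/matrixP => a c; rewrite !mxE /=.
case: eqP => [/grp_inj ca | //]; rewrite ca eqxx !gnorm_singleton /=.
have : b (enum_val a) 0 != 0 by have := enum_valP a; rewrite inE gnorm_singleton normr_eq0.
rewrite -normr_eq0 -[b _ 0 * b _ 0]expr2 -real_normK ?num_real // => b0.
by rewrite [X in _ * X](_ : _ = 0) ?mulr0 //; field.
Qed.

Lemma Bmat_singleton : Bmat X y grp w b = 0.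
Proof. by rewrite /Bmat Pimat_singleton mulmx0 mul0mx. Qed.

Lemma Phimat_singleton a c : Phimat X y grp w b a c =
  (a == c)%:R * (let j := enum_val a in
    Num.sg (b j 0) * Num.sg (bLS X y j 0) * derive1 (w (grp j)) `|bLS X y j 0|).
Proof.
rewrite /Phimat mxE /=; have [<-|ac] := eqVneq a c.
  by rewrite eqxx mul1r !gnorm_singleton !divr_norm_sg mulrAC.
by rewrite mul0r ifN // (inj_eq grp_inj) (inj_eq enum_val_inj) eq_sym.
Qed.

Hypothesis XA_unit :
  (subcols X (actG grp b))^T *m subcols X (actG grp b) \in unitmx.

Lemma mxtrace_Cmat_singleton : \tr (Cmat X y grp w b) =
  \sum_(a < #|actG grp b|)
    (let j := enum_val a in
     Num.sg (b j 0) * Num.sg (bLS X y j 0) * derive1 (w (grp j)) `|bLS X y j 0|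
       * invmx ((subcols X (actG grp b))^T *m subcols X (actG grp b)) a a).
Proof.
rewrite /Cmat mxtrace_mulC mulmxA trmx_Mmat_mul //; apply: eq_bigr => a _.
rewrite mxE (bigD1 a) //= big1 => [|c ca]; last first.
  by rewrite Phimat_singleton (negPf ca) mul0r mulr0.
by rewrite Phimat_singleton eqxx mul1r addr0 mulrC.
Qed.

Lemma df_agl_singleton gam : df_agl X y grp w b gam = df_al X y grp w b gam.
Proof.
rewrite /df_agl Bmat_singleton scaler0 addr0 invmx1 mul1mx raddfB /= mxtraceZ.
rewrite mxtrace_Amat // mxtrace_Cmat_singleton // /df_al /=.
by move: (actG_singleton b); move: (actG grp b) => S ->.
Qed.

End SingletonGroups.

Section ConstantWeights.
Variables (R : realType) (n p G : nat) (X : 'M[R]_(n, p)) (y : 'cV[R]_n).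
Variables (grp : 'I_p -> 'I_G) (w : 'I_G -> R -> R) (b : 'cV[R]_p).
Hypothesis w_const : forall (g : 'I_G) (z1 z2 : R), w g z1 = w g z2.

Lemma derive1_const_weight g z : derive1 (w g) z = 0.
Proof.
have -> : w g = cst (w g 0) by apply/funext => t; apply: w_const.
exact: derive1_cst.
Qed.

Lemma Cmat_const_weight : Cmat X y grp w b = 0.
Proof.
rewrite /Cmat; have -> : Phimat X y grp w b = 0.
  apply/matrixP => a c; rewrite !mxE /=.
  by case: ifP => // _; rewrite derive1_const_weight mulr0 mul0r.
by rewrite mulmx0 mul0mx.
Qed.

Lemma df_agl_const_weight gam : df_agl X y grp w b gam = df_gl X y grp w b gam.
Proof. by rewrite /df_agl /df_gl Cmat_const_weight scaler0 subr0. Qed.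

Lemma df_al_const_weight gam : df_al X y grp w b gam = #|actP b|%:R.
Proof.
rewrite /df_al big1 ?mulr0 ?subr0 // => a _.
by rewrite derive1_const_weight mulr0 mul0r.
Qed.

End ConstantWeights.

Theorem corollaryS7 (R : realType) (n p G : nat)
  (X : 'M[R]_(n, p)) (y : 'cV[R]_n) (grp : 'I_p -> 'I_G)
  (w : 'I_G -> R -> R) (bhat : R -> 'cV[R]_p) (gam : R) :
  (* least squares estimate exists *)
  X^T *m X \in unitmx ->
  (* differentiable weight functions *)
  (forall (g : 'I_G) (z : R), 0 < z -> derivable (w g) z 1) ->
  (* bhat gam' is the Adaptive Group Lasso estimate for every gam' > 0 *)
  (forall gam' : R, 0 < gam' -> forall b : 'cV[R]_p,
     agl_obj X y grp w gam' (bhat gam') <= agl_obj X y grp w gam' b) ->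
  (* gam lies strictly between two consecutive transition points *)
  0 < gam ->
  (exists2 eps : R, 0 < eps & forall gam' : R, 0 < gam' ->
     `|gam' - gam| < eps -> actP (bhat gam') = actP (bhat gam)) ->
  (* Gram matrix of the active groups is invertible *)
  let XA := subcols X (actG grp (bhat gam)) in
  XA^T *m XA \in unitmx ->
  [/\ (* (i) groups of size one: Adaptive Lasso *)
      ((forall g : 'I_G, gcard grp g = 1%N) ->
        df_agl X y grp w (bhat gam) gam = df_al X y grp w (bhat gam) gam),
      (* (ii) weights not depending on y: Group Lasso *)
      ((forall (g : 'I_G) (z1 z2 : R), w g z1 = w g z2) ->
        Cmat X y grp w (bhat gam) = 0 /\
        df_agl X y grp w (bhat gam) gam = df_gl X y grp w (bhat gam) gam)
    & (* (iii) both: Lasso *)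
      ((forall g : 'I_G, gcard grp g = 1%N) ->
       (forall (g : 'I_G) (z1 z2 : R), w g z1 = w g z2) ->
        df_agl X y grp w (bhat gam) gam = #|actP (bhat gam)|%:R)].
Proof.
move=> _ _ _ _ _ XA XA_unit; split.
- by move=> gcard1; apply: df_agl_singleton.
- by move=> w_const; split; [apply: Cmat_const_weight | apply: df_agl_const_weight].
- move=> gcard1 w_const.
  by rewrite df_agl_singleton // df_al_const_weight.
Qed.
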